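(* Let $\mathcal{D}=\{(\mathbf{x}_1,y_1),\ldots,(\mathbf{x}_n,y_n)\}$, $\mathbf{x}_i\in\mathbb{R}^d$, $1\le m<n$, $\mathcal{D}_m=\{(\mathbf{x}_{n-m+1},y_{n-m+1}),\ldots,(\mathbf{x}_n,y_n)\}$. Let $\ell$ be a convex loss, differentiable everywhere, twice differentiable in its first argument, and $\lambda>0$. For a dataset $S$ let $L(\mathbf{w};S)=\sum_{(\mathbf{x},y)\in S}\ell(\mathbf{w}^\top\mathbf{x},y)+\frac{\lambda|S|}{2}\|\mathbf{w}\|_2^2$. Let $\mathbf{w}^*=\arg\min L(\cdot;\mathcal{D})$, $$\Delta^{(m)}=m\lambda\mathbf{w}^*+\sum_{j=n-m+1}^n\nabla\ell((\mathbf{w}^* )^\top\mathbf{x}_j,y_j),\quad H^{(m)}_{\mathbf{w}^*}=\nabla^2L(\mathbf{w}^*;\mathcal{D}\setminus\mathcal{D}_m),\quad \mathbf{w}^{(-m)}=\mathbf{w}^*+\big[H^{(m)}_{\mathbf{w}^*}\big]^{-1}\Delta^{(m)}.$$ Suppose that $\|\nabla\ell(\mathbf{w}^\top\mathbf{x}_i,y_i)\|_2\le C$ for all $(\mathbf{x}_i,y_i)\in\mathcal{D}$ and $\mathbf{w}\in\mathbb{R}^d$, that $\ell''$ is $\gamma$-Lipschitz, and that $\|\mathbf{x}_i\|_2\le1$ for all $i$. Then $$\|\nabla L(\mathbf{w}^{(-m)};\mathcal{D}\setminus\mathcal{D}_m)\|_2\le\gamma(n-m)\Big\|\big[H^{(m)}_{\mathbf{w}^*}\big]^{-1}\Delta^{(m)}\Big\|_2^2\le\frac{4\gamma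 m^2C^2}{\lambda^2(n-m)}.$$
   Context: Gradients/Hessians are with respect to $\mathbf{w}$; $\ell''$ is the second derivative of $\ell$ in its first argument. *)

From HB Require Import structures.
From mathcomp Require Import all_boot all_order all_algebra.
From mathcomp Require Import all_classical all_reals all_analysis.
Set Implicit Arguments. Unset Strict Implicit. Unset Printing Implicit Defensive.
Import Order.TTheory GRing.Theory Num.Theory.
Import numFieldNormedType.Exports.
Local Open Scope ring_scope.

Section Defs.
Variable R : realType.

Definition dotv (d : nat) (u v : 'cV[R]_d) : R := \sum_(k < d) u k 0 * v k 0.
Definition norm2 (d : nat) (v : 'cV[R]_d) : R := Num.sqrt (dotv v v).

Definition basisv (d : nat) (k : 'I_d) : 'cV[R]_d := delta_mx k 0.

Definition grad (d : nat) (f : 'cV[R]_d -> R) (w : 'cV[R]_d) : 'cV[R]_d :=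
  \col_(k < d) 'D_(basisv k) f w.
Definition hess (d : nat) (f : 'cV[R]_d -> R) (w : 'cV[R]_d) : 'M[R]_d :=
  \matrix_(k < d, j < d) 'D_(basisv j) (fun u => 'D_(basisv k) f u) w.

Definition dl1 (l : R -> R -> R) (z y : R) : R := derive1 (fun t => l t y) z.
Definition dl2 (l : R -> R -> R) (z y : R) : R := derive1 (fun t => dl1 l t y) z.

Definition loss_convex (l : R -> R -> R) : Prop :=
  forall (y z1 z2 t : R), 0 <= t <= 1 ->
    l (t * z1 + (1 - t) * z2) y <= t * l z1 y + (1 - t) * l z2 y.

Definition regL (n d : nat) (l : R -> R -> R) (lam : R)
    (x : 'I_n -> 'cV[R]_d) (y : 'I_n -> R) (S : {set 'I_n}) (w : 'cV[R]_d) : R :=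
  \sum_(i in S) l (dotv w (x i)) (y i) + lam * (#|S|%:R) / 2 * norm2 w ^+ 2.

End Defs.

(* The gradient of L(.;S) is g_S(w) = sum_(i in S) l'(w^T x_i) x_i + lam |S| w and its Hessian
   is H_S(w) = sum_(i in S) l''(w^T x_i) x_i x_i^T + lam |S| I; convexity of l gives l'' >= 0,
   hence H_S(w) >= lam |S| I. Write u for the minimiser w^*. As g_D = g_(D\D_m) + g_(D_m)
   vanishes at u and Delta = g_(D_m)(u), the vector v = H^-1 Delta is a Newton step for
   g_(D\D_m) from u, so g_(D\D_m)(u + v) = g(u + v) - g(u) - H v = sum_i r_i x_i, where the
   mean value theorem and the gamma-Lipschitz continuity of l'' give
   |r_i| <= gamma (v^T x_i)^2 <= gamma ||v||^2. For the second bound,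
   lam (n - m) ||v|| <= ||H v|| = ||Delta|| <= 2 m C, because g_D(u) = 0 forces
   lam ||u|| <= C. *)

From HB Require Import structures.
From mathcomp Require Import all_boot all_order all_algebra.
From mathcomp Require Import all_classical all_reals all_analysis.
From mathcomp Require Import ring lra.
Set Implicit Arguments. Unset Strict Implicit. Unset Printing Implicit Defensive.
Import Order.TTheory GRing.Theory Num.Theory.
Import numFieldNormedType.Exports.
Local Open Scope ring_scope.

Section Euclidean.
Variables (R : realType) (d : nat).
Implicit Types (u v w : 'cV[R]_d) (a : R) (A : 'M[R]_d).

Lemma dotvC u v : dotv u v = dotv v u.
Proof. by apply: eq_bigr => k _; rewrite mulrC. Qed.

Lemma dotvDl u v w : dotv (u + v) w = dotv u w + dotv v w.
Proof. by rewrite /dotv -big_split; apply: eq_bigr => k _; rewrite mxE mulrDl. Qed.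

Lemma dotvZl a u w : dotv (a *: u) w = a * dotv u w.
Proof. by rewrite /dotv mulr_sumr; apply: eq_bigr => k _; rewrite mxE mulrA. Qed.

Lemma dotvNl u w : dotv (- u) w = - dotv u w.
Proof. by rewrite -scaleN1r dotvZl mulN1r. Qed.

Lemma dotvDr u v w : dotv w (u + v) = dotv w u + dotv w v.
Proof. by rewrite !(dotvC w) dotvDl. Qed.

Lemma dotvZr a u w : dotv w (a *: u) = a * dotv w u.
Proof. by rewrite !(dotvC w) dotvZl. Qed.

Lemma dotvNr u w : dotv w (- u) = - dotv w u.
Proof. by rewrite !(dotvC w) dotvNl. Qed.

Lemma dotv0l w : dotv 0 w = 0.
Proof. by rewrite /dotv big1 // => k _; rewrite mxE mul0r. Qed.

Lemma dotv_sumr (I : finType) (P : pred I) (F : I -> 'cV[R]_d) w :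
  dotv w (\sum_(i | P i) F i) = \sum_(i | P i) dotv w (F i).
Proof.
rewrite /dotv exchange_big /=; apply: eq_bigr => k _.
by rewrite summxE mulr_sumr.
Qed.

Lemma dotv_mx u v : dotv u v = (u^T *m v) 0 0.
Proof. by rewrite /dotv mxE; apply: eq_bigr => k _; rewrite mxE. Qed.

Lemma dotv_basisl (k : 'I_d) u : dotv (basisv R k) u = u k 0.
Proof.
rewrite /dotv (bigD1 k) //= big1 ?addr0; first by rewrite /basisv mxE !eqxx mul1r.
by move=> j jk; rewrite /basisv mxE (negbTE jk) mul0r.
Qed.

Lemma dotvv_ge0 u : 0 <= dotv u u.
Proof. by rewrite /dotv sumr_ge0 // => k _; rewrite -expr2 sqr_ge0. Qed.

Lemma dotvv_eq0 u : (dotv u u == 0) = (u == 0).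
Proof.
apply/idP/eqP => [|->]; last by rewrite dotv0l.
rewrite /dotv psumr_eq0 => [/allP u0|k _]; last by rewrite -expr2 sqr_ge0.
apply/matrixP => i j; rewrite (ord1 j) !mxE.
by have /implyP/(_ isT) := u0 i (mem_index_enum i); rewrite -expr2 sqrf_eq0 => /eqP.
Qed.

Lemma norm2_ge0 u : 0 <= norm2 u.
Proof. exact: sqrtr_ge0. Qed.

Lemma norm2_sqr u : norm2 u ^+ 2 = dotv u u.
Proof. by rewrite sqr_sqrtr // dotvv_ge0. Qed.

Lemma norm2N u : norm2 (- u) = norm2 u.
Proof. by rewrite /norm2 dotvNl dotvNr opprK. Qed.

Lemma norm2Z a u : norm2 (a *: u) = `|a| * norm2 u.
Proof.
by rewrite /norm2 dotvZl dotvZr mulrA -expr2 sqrtrM ?sqr_ge0 // sqrtr_sqr.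
Qed.

Lemma sqr_dotv_le u v : dotv u v ^+ 2 <= dotv u u * dotv v v.
Proof.
have [/eqP v0|v0] := eqVneq (dotv v v) 0.
  by move: v0; rewrite dotvv_eq0 => /eqP ->; rewrite dotvC !dotv0l mulr0 expr0n.
have vv_gt0 : 0 < dotv v v by rewrite lt_def v0 dotvv_ge0.
have := dotvv_ge0 (dotv v v *: u - dotv u v *: v).
rewrite !(dotvDl, dotvDr, dotvNl, dotvNr, dotvZl, dotvZr) (dotvC v u) => H.
have : 0 <= dotv v v * (dotv u u * dotv v v - dotv u v ^+ 2) by nra.
by rewrite pmulr_rge0 // subr_ge0.
Qed.

Lemma dotv_le u v : `|dotv u v| <= norm2 u * norm2 v.
Proof.
rewrite -ler_sqr ?nnegrE ?mulr_ge0 ?norm2_ge0 //.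
by rewrite real_normK ?num_real // exprMn !norm2_sqr sqr_dotv_le.
Qed.

Lemma norm2D_le u v : norm2 (u + v) <= norm2 u + norm2 v.
Proof.
rewrite -ler_sqr ?nnegrE ?addr_ge0 ?norm2_ge0 //.
rewrite sqrrD !norm2_sqr !(dotvDl, dotvDr) (dotvC v u).
by have := dotv_le u v; have := ler_norm (dotv u v); lra.
Qed.

Lemma norm2_sum_le (I : finType) (P : pred I) (F : I -> 'cV[R]_d) :
  norm2 (\sum_(i | P i) F i) <= \sum_(i | P i) norm2 (F i).
Proof.
elim/big_ind2: _ => [|a u b v ua vb|//]; first by rewrite /norm2 dotv0l sqrtr0.
exact: le_trans (norm2D_le u v) (lerD ua vb).
Qed.

Lemma unitmx_posdef A : (forall u, u != 0 -> 0 < dotv u (A *m u)) -> A \in unitmx.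
Proof.
move=> A_pos; rewrite unitmxE unitfE; apply/negP => /det0P[r r0 rA].
have := A_pos r^T; rewrite trmx_eq0 dotv_mx trmxK mulmxA rA mul0mx mxE ltxx.
by move/(_ r0).
Qed.

Lemma norm2_mulmx_ge A c u :
  c * dotv u u <= dotv u (A *m u) -> c * norm2 u <= norm2 (A *m u).
Proof.
rewrite -norm2_sqr => quad.
have [->|u_gt0] := eqVneq (norm2 u) 0; first by rewrite mulr0 norm2_ge0.
have u_pos : 0 < norm2 u by rewrite lt_def u_gt0 norm2_ge0.
rewrite -(ler_pM2l u_pos) mulrCA -expr2.
apply: le_trans quad (le_trans (ler_norm _) (dotv_le _ _)).
Qed.

End Euclidean.

Section Directional.
Variables (R : realType) (V : normedModType R).

Lemma derive_line {W : normedModType R} (F : V -> W) (w e : V) :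
  'D_e F w = 'D_1 (fun h : R => F (h *: e + w)) 0.
Proof.
rewrite /derive; set g1 := fun h => h^-1 *: _; set g2 := fun h => h^-1 *: _.
suff -> : g1 = g2 by [].
by apply/funext => h; rewrite /g1 /g2 /= addr0 scale0r add0r [_%:A]mulr1.
Qed.

Lemma is_derive_lineP {W : normedModType R} (F : V -> W) (w e : V) (D : W) :
  is_derive w e F D <-> is_derive (0 : R) 1 (fun h : R => F (h *: e + w)) D.
Proof.
split=> -[dF DF]; apply: DeriveDef.
- exact: (derivable1P F w e).1 dF.
- by rewrite -derive_line.
- exact: (derivable1P F w e).2 dF.
- by rewrite derive_line.
Qed.

Lemma is_derive_bigsum {W : normedModType R} (I : finType) (P : pred I)
    (F : I -> V -> W) (dF : I -> W) (w e : V) :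
  (forall i, is_derive w e (F i) (dF i)) ->
  is_derive w e (fun u => \sum_(i | P i) F i u) (\sum_(i | P i) dF i).
Proof.
move=> FdF; rewrite -fct_sumE.
elim/big_ind2: _ => [|F1 D1 F2 D2 FD1 FD2|//]; first exact: is_derive_cst.
exact: is_deriveD.
Qed.

Lemma derive_eq0_at_min (F : V -> R) (w e : V) :
  (forall u, derivable F u e) -> (forall u, F w <= F u) -> 'D_e F w = 0.
Proof.
move=> dF Fmin; rewrite derive_line.
suff [] : is_derive (0 : R) 1 (fun h : R => F (h *: e + w)) 0 by [].
apply: (@derive1_at_min _ _ (-1) 1).
- lra.
- move=> t _; apply: (derivable1P _ t 1).2.
  have -> : (fun h : R => F ((h *: 1 + t) *: e + w)) = (fun h => F (h *: e + (t *: e + w))).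
    by apply/funext => h; rewrite [h *: 1]mulr1 scalerDl addrA.
  exact: (derivable1P F _ e).1 (dF _).
- by rewrite in_itv /=; lra.
- by move=> t _; rewrite scale0r add0r.
Qed.

End Directional.

Lemma is_derive1_dir {R : realType} (g : R -> R) (z c dg : R) :
  is_derive z 1 g dg -> is_derive z c g (c * dg).
Proof.
move=> [dg1 <-]; have gz : differentiable g z by apply/derivable1_diffP.
apply: DeriveDef; first exact: diff_derivable.
by rewrite deriveE // diff1E // derive1E.
Qed.

Section GradHess.
Variables (R : realType) (d : nat).
Implicit Types (u w e a : 'cV[R]_d).

Lemma is_derive_comp_dotv (g : R -> R) (dg : R) a w e :
  is_derive (dotv w a) 1 g dg -> is_derive w e (fun u => g (dotv u a)) (dg * dotv e a).
Proof.
move=> /(@is_derive1_dir _ g _ (dotv e a)) gdg; apply: (is_derive_lineP _ w e _).2.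
have -> : (fun h : R => g (dotv (h *: e + w) a)) = (fun h => g (h *: dotv e a + dotv w a)).
  by apply/funext => h; rewrite dotvDl dotvZl.
by rewrite mulrC; apply: (is_derive_lineP g _ _ _).1.
Qed.

Lemma is_derive_dotvv w e : is_derive w e (fun u => dotv u u) (2 * dotv e w).
Proof.
apply: (is_derive_lineP _ w e _).2.
pose p : {poly R} := dotv e e *: 'X^2 + (2 * dotv e w) *: 'X + (dotv w w)%:P.
have -> : (fun h : R => dotv (h *: e + w) (h *: e + w)) = horner p.
  apply/funext => h; rewrite /p !hornerE !(dotvDl, dotvDr, dotvZl, dotvZr) (dotvC w e) /=.
  ring.
have [p0 Dp] := is_derive_poly p 0; apply: DeriveDef => //.
by rewrite Dp /p !(derivD, derivZ, derivXn, derivX, derivC) !hornerE /=; ring.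
Qed.

Lemma grad_is_derive (f : 'cV[R]_d -> R) w (g : 'cV[R]_d) :
  (forall e, is_derive w e f (dotv e g)) -> grad f w = g.
Proof.
move=> fg; apply/matrixP => k j; rewrite (ord1 j) mxE.
by have [_ ->] := fg (basisv R k); rewrite dotv_basisl.
Qed.

Lemma hess_is_derive (f : 'cV[R]_d -> R) (G : 'cV[R]_d -> 'cV[R]_d) w (M : 'M[R]_d) :
  (forall u e, is_derive u e f (dotv e (G u))) ->
  (forall k e, is_derive w e (fun u => G u k 0) ((M *m e) k 0)) ->
  hess f w = M.
Proof.
move=> fG GM; apply/matrixP => k j; rewrite mxE.
have -> : (fun u => 'D_(basisv R k) f u) = (fun u => G u k 0).
  by apply/funext => u; have [_ ->] := fG u (basisv R k); rewrite dotv_basisl.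
by have [_ ->] := GM k (basisv R j); rewrite /basisv -colE mxE.
Qed.

Lemma grad_comp_dotv (g : R -> R) a w :
  derivable g (dotv w a) 1 -> grad (fun u => g (dotv u a)) w = derive1 g (dotv w a) *: a.
Proof.
move=> /derivableP; rewrite -derive1E => gdg.
apply: grad_is_derive => e; rewrite dotvZr.
exact: is_derive_comp_dotv.
Qed.

Lemma grad_eq0_at_min (f : 'cV[R]_d -> R) w :
  (forall u e, derivable f u e) -> (forall u, f w <= f u) -> grad f w = 0.
Proof.
move=> df fmin; apply/matrixP => k j; rewrite !mxE.
exact: derive_eq0_at_min.
Qed.

End GradHess.

Section DifferenceQuotients.
Variable R : realType.
Local Open Scope classical_set_scope.
Implicit Types (f : R -> R) (a : R).

Lemma derive1_cvg_at_right f a : derivable f a 1 ->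
  (fun h => h^-1 * (f (h + a) - f a)) @ 0^'+ --> 'D_1 f a.
Proof.
move=> df; have -> : (fun h => h^-1 * (f (h + a) - f a)) =
    (fun h => h^-1 *: ((f \o shift a) (h *: 1) - f a)).
  by apply/funext => h; rewrite [h *: 1]mulr1.
apply: cvg_trans df; apply: cvg_app => A [e e0 Ae].
by exists e => // h he h0; apply: Ae => //; rewrite gt_eqF.
Qed.

Lemma derive1_cvg_at_left f a : derivable f a 1 ->
  (fun h => h^-1 * (f (h + a) - f a)) @ 0^'- --> 'D_1 f a.
Proof.
move=> df; have -> : (fun h => h^-1 * (f (h + a) - f a)) =
    (fun h => h^-1 *: ((f \o shift a) (h *: 1) - f a)).
  by apply/funext => h; rewrite [h *: 1]mulr1.
apply: cvg_trans df; apply: cvg_app => A [e e0 Ae].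
by exists e => // h he h0; apply: Ae => //; rewrite lt_eqF.
Qed.

End DifferenceQuotients.

Section ConvexFunctions.
Variables (R : realType) (f : R -> R).
Hypothesis f_convex :
  forall z1 z2 t, 0 <= t <= 1 -> f (t * z1 + (1 - t) * z2) <= t * f z1 + (1 - t) * f z2.

Lemma convex_le_chord a b c : a < c < b ->
  f c <= f a + (c - a) / (b - a) * (f b - f a).
Proof.
move=> /andP[ac cb]; have ab := lt_trans ac cb.
have ba_gt0 : 0 < b - a by rewrite subr_gt0.
pose t := (c - a) / (b - a).
have t01 : 0 <= t <= 1.
  apply/andP; split; first by apply: divr_ge0; lra.
  by rewrite ler_pdivrMr // mul1r; lra.
have := f_convex b a t01.
have -> : t * b + (1 - t) * a = c by rewrite /t; field; rewrite gt_eqF.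
by rewrite -/t; lra.
Qed.

Lemma convex_slope_le a b c : a < c < b ->
  (f c - f a) / (c - a) <= (f b - f a) / (b - a).
Proof.
move=> /[dup] /convex_le_chord fc /andP[ac cb].
have ba_gt0 : 0 < b - a by rewrite subr_gt0 (lt_trans ac cb).
rewrite ler_pdivrMr ?subr_gt0 //.
have -> : (f b - f a) / (b - a) * (c - a) = (c - a) / (b - a) * (f b - f a).
  by ring.
lra.
Qed.

Lemma convex_slope_ge a b c : a < c < b ->
  (f b - f a) / (b - a) <= (f b - f c) / (b - c).
Proof.
move=> /[dup] /convex_le_chord fc /andP[ac cb].
have ba_gt0 : 0 < b - a by rewrite subr_gt0 (lt_trans ac cb).
rewrite ler_pdivlMr ?subr_gt0 //.
have -> : (f b - f a) / (b - a) * (b - c) = (f b - f a) - (c - a) / (b - a) * (f b - f a).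
  by field; rewrite gt_eqF.
lra.
Qed.

Lemma convex_derive1_le_slope a b : a < b -> derivable f a 1 ->
  'D_1 f a <= (f b - f a) / (b - a).
Proof.
move=> ab /derive1_cvg_at_right/cvgr_to_le; apply.
have ba_gt0 : 0 < b - a by rewrite subr_gt0.
near=> h; rewrite mulrC -[X in _ / X](addrK a h).
apply: convex_slope_le; rewrite ltrDr -ltrBrDr; apply/andP; split.
  by near: h; exact: nbhs_right_gt.
by near: h; exact: nbhs_right_lt.
Unshelve. all: by end_near. Qed.

Lemma convex_slope_le_derive1 a b : a < b -> derivable f b 1 ->
  (f b - f a) / (b - a) <= 'D_1 f b.
Proof.
move=> ab /derive1_cvg_at_left/cvgr_to_ge; apply.
have ab_lt0 : a - b < 0 by rewrite subr_lt0.
near=> h.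
have -> : h^-1 * (f (h + b) - f b) = (f b - f (h + b)) / (b - (h + b)).
  by rewrite opprD addrCA subrr addr0 invrN mulrN -mulNr opprB mulrC.
apply: convex_slope_ge; rewrite gtrDr -ltrBlDr; apply/andP; split.
  by near: h; exact: nbhs_left_gt.
by near: h; exact: nbhs_left_lt.
Unshelve. all: by end_near. Qed.

Lemma convex_derive1_nondecreasing : (forall z, derivable f z 1) ->
  {homo 'D_1 f : a b / a <= b}.
Proof.
move=> df a b; rewrite le_eqVlt => /predU1P[-> // | ab].
exact: le_trans (convex_derive1_le_slope ab (df a)) (convex_slope_le_derive1 ab (df b)).
Qed.

End ConvexFunctions.

Section RealDerivatives.
Variable R : realType.
Local Open Scope classical_set_scope.
Implicit Types (f g df : R -> R) (a b k : R).

Lemma nondecreasing_derive1_ge0 g a :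
  {homo g : u v / u <= v} -> derivable g a 1 -> 0 <= 'D_1 g a.
Proof.
move=> g_ndecr /derive1_cvg_at_right/cvgr_to_ge; apply.
near=> h; have h_gt0 : 0 < h by near: h; exact: nbhs_right_gt.
apply: mulr_ge0; first by rewrite invr_ge0 ltW.
by rewrite subr_ge0 g_ndecr // lerDr ltW.
Unshelve. all: by end_near. Qed.

Lemma lipschitz_ge0 g k : (forall u v, `|g u - g v| <= k * `|u - v|) -> 0 <= k.
Proof. by move=> /(_ 1 0); rewrite subr0 normr1 mulr1; exact: le_trans. Qed.

Lemma MVT_between f df a b : (forall z : R, is_derive z (1 : R) f (df z)) ->
  exists2 c, `|c - a| <= `|b - a| & f b - f a = df c * (b - a).
Proof.
move=> fdf; have fcont c d : {within `[c, d], continuous f}.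
  by apply: derivable_within_continuous => z _; have [] := fdf z.
have [ab|ba] := lerP a b.
  have [c] := MVT_segment ab (fun z _ => fdf z) (fcont a b).
  rewrite in_itv /= => /andP[ac cb] ->.
  by exists c; rewrite // !ger0_norm ?subr_ge0 // lerD2r.
have [c] := MVT_segment (ltW ba) (fun z _ => fdf z) (fcont b a).
rewrite in_itv /= => /andP[bc ca] E.
exists c; last by rewrite -opprB E -mulrN opprB.
by rewrite !ler0_norm ?subr_le0 ?(ltW ba) //; lra.
Qed.

Lemma lipschitz_derive1_remainder f df k a t :
  (forall z : R, is_derive z (1 : R) f (df z)) -> (forall u v, `|df u - df v| <= k * `|u - v|) ->
  `|f (a + t) - f a - df a * t| <= k * t ^+ 2.
Proof.
move=> fdf df_lip; have k_ge0 := lipschitz_ge0 df_lip.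
have [c ca ->] := MVT_between a (a + t) fdf; rewrite addrAC subrr add0r in ca *.
rewrite -mulrBl normrM -real_normK ?num_real // expr2 mulrA.
apply: ler_wpM2r => //; apply: le_trans (df_lip c a) _.
exact: ler_wpM2l.
Qed.

End RealDerivatives.

Section RegularizedLoss.
Variables (R : realType) (n d : nat) (l : R -> R -> R) (lam : R).
Variables (x : 'I_n -> 'cV[R]_d) (y : 'I_n -> R).
Implicit Types (S : {set 'I_n}) (u v w e : 'cV[R]_d).

Definition gradL S w : 'cV[R]_d :=
  \sum_(i in S) dl1 l (dotv w (x i)) (y i) *: x i + (lam * #|S|%:R) *: w.

Definition hessL S w : 'M[R]_d :=
  \sum_(i in S) dl2 l (dotv w (x i)) (y i) *: (x i *m (x i)^T) + (lam * #|S|%:R)%:M.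

Lemma hessL_mulmx S w u :
  hessL S w *m u =
  \sum_(i in S) (dl2 l (dotv w (x i)) (y i) * dotv (x i) u) *: x i + (lam * #|S|%:R) *: u.
Proof.
rewrite mulmxDl mul_scalar_mx mulmx_suml; congr (_ + _); apply: eq_bigr => i _.
rewrite -scalemxAl -mulmxA -scalerA; congr (_ *: _).
have -> : (x i)^T *m u = (dotv (x i) u)%:M.
  by apply/matrixP => ? ?; rewrite !ord1 !mxE dotv_mx mxE.
by rewrite mul_mx_scalar.
Qed.

Lemma gradL_setC S w : gradL S w + gradL (~: S) w = gradL [set: 'I_n] w.
Proof.
rewrite /gradL cardsT -(cardsC S) natrD mulrDr scalerDl addrACA; congr (_ + _).
(* Unqualified, [setTI] and [setTD] would resolve to their classical_sets namesakes. *)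
by rewrite [RHS](big_setID S) finset.setTI finset.setTD.
Qed.

Lemma hessL_quad S w u : (forall z yv, 0 <= dl2 l z yv) -> 0 <= lam ->
  lam * #|S|%:R * dotv u u <= dotv u (hessL S w *m u).
Proof.
move=> dl2_ge0 lam_ge0; rewrite hessL_mulmx dotvDr dotvZr lerDr dotv_sumr.
apply: sumr_ge0 => i _; rewrite dotvZr (dotvC u) -mulrA mulr_ge0 //.
by rewrite -expr2 sqr_ge0.
Qed.

Lemma hessL_unit S w : (forall z yv, 0 <= dl2 l z yv) -> 0 < lam -> (0 < #|S|)%N ->
  hessL S w \in unitmx.
Proof.
move=> dl2_ge0 lam_gt0 S_gt0; apply: unitmx_posdef => u u0.
apply: lt_le_trans (hessL_quad S w u dl2_ge0 (ltW lam_gt0)).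
by rewrite !mulr_gt0 ?ltr0n // lt_def dotvv_eq0 u0 dotvv_ge0.
Qed.

Lemma lam_norm2_le_at_crit S w C : gradL S w = 0 -> (0 < #|S|)%N -> 0 < lam ->
  (forall i, norm2 (dl1 l (dotv w (x i)) (y i) *: x i) <= C) -> lam * norm2 w <= C.
Proof.
move=> crit S_gt0 lam_gt0 gradC.
have S_pos : 0 < #|S|%:R :> R by rewrite ltr0n.
rewrite -(ler_pM2r S_pos) mulrAC.
have -> : lam * #|S|%:R * norm2 w = norm2 ((lam * #|S|%:R) *: w).
  by rewrite norm2Z ger0_norm // mulr_ge0 ?ltW.
move: crit; rewrite /gradL addrC => /eqP; rewrite addr_eq0 => /eqP ->.
rewrite norm2N; apply: le_trans (norm2_sum_le _ _) _.
by apply: le_trans (ler_sum _ (fun i _ => gradC i)) _; rewrite sumr_const mulr_natr.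
Qed.

Lemma norm2_gradL_le S w C : 0 <= lam -> lam * norm2 w <= C ->
  (forall i, norm2 (dl1 l (dotv w (x i)) (y i) *: x i) <= C) ->
  norm2 (gradL S w) <= 2 * #|S|%:R * C.
Proof.
move=> lam_ge0 lamw gradC; apply: le_trans (norm2D_le _ _) _.
rewrite norm2Z ger0_norm ?mulr_ge0 // mulrAC -mulrA (mulr_natl _ 2) mulr2n mulrDl.
apply: lerD; first apply: le_trans (norm2_sum_le _ _) _.
  by apply: le_trans (ler_sum _ (fun i _ => gradC i)) _; rewrite sumr_const mulr_natl.
by rewrite mulrA mulrC; apply: ler_wpM2l.
Qed.

Lemma norm2_newton_step_le S w v C : (forall z yv, 0 <= dl2 l z yv) -> 0 < lam ->
  (0 < n)%N -> gradL [set: 'I_n] w = 0 ->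
  (forall i, norm2 (dl1 l (dotv w (x i)) (y i) *: x i) <= C) ->
  hessL S w *m v = gradL (~: S) w ->
  lam * #|S|%:R * norm2 v <= 2 * #|~: S|%:R * C.
Proof.
move=> dl2_ge0 lam_gt0 n_gt0 crit gradC Hv.
have lam_w : lam * norm2 w <= C.
  by apply: lam_norm2_le_at_crit crit _ lam_gt0 gradC; rewrite cardsT card_ord.
apply: le_trans (norm2_gradL_le _ (ltW lam_gt0) lam_w gradC).
by rewrite -Hv; apply/norm2_mulmx_ge/hessL_quad => //; exact: ltW.
Qed.

Hypothesis l_derivable : forall yv z : R, derivable (fun t => l t yv) z 1.

Lemma is_derive_loss (z yv : R) : is_derive z (1 : R) (fun t => l t yv) (dl1 l z yv).
Proof. by rewrite /dl1 derive1E; apply: derivableP. Qed.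

Lemma is_derive_regL S w e : is_derive w e (regL l lam x y S) (dotv e (gradL S w)).
Proof.
have -> : regL l lam x y S = fun u =>
    \sum_(i in S) l (dotv u (x i)) (y i) + lam * #|S|%:R / 2 * dotv u u.
  by apply/funext => u; rewrite /regL norm2_sqr.
have loss_d : is_derive w e (fun u => \sum_(i in S) l (dotv u (x i)) (y i))
    (\sum_(i in S) dl1 l (dotv w (x i)) (y i) * dotv e (x i)).
  apply: (is_derive_bigsum _ (F := fun i u => l (dotv u (x i)) (y i))) => i.
  exact: (is_derive_comp_dotv (g := fun t => l t (y i)) _ (is_derive_loss _ _)).
apply: is_derive_eq (is_deriveD loss_d (is_deriveZ (lam * #|S|%:R / 2) (is_derive_dotvv w e))) _.
rewrite /gradL dotvDr dotv_sumr dotvZr; congr (_ + _).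
  by apply: eq_bigr => i _; rewrite dotvZr.
by rewrite /GRing.scale /=; field.
Qed.

Lemma grad_regL S w : grad (regL l lam x y S) w = gradL S w.
Proof. exact/grad_is_derive/is_derive_regL. Qed.

Lemma grad_loss_term i w :
  grad (fun u => l (dotv u (x i)) (y i)) w = dl1 l (dotv w (x i)) (y i) *: x i.
Proof. exact: grad_comp_dotv. Qed.

Lemma gradL_eq0_at_min S w :
  (forall u, regL l lam x y S w <= regL l lam x y S u) -> gradL S w = 0.
Proof.
move=> wmin; rewrite -grad_regL; apply: grad_eq0_at_min wmin => u e.
by have [] := is_derive_regL S u e.
Qed.

Hypothesis dl1_derivable : forall yv z : R, derivable (fun t => dl1 l t yv) z 1.

Lemma is_derive_dl1 (z yv : R) : is_derive z (1 : R) (fun t => dl1 l t yv) (dl2 l z yv).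
Proof. by rewrite /dl2 derive1E; apply: derivableP. Qed.

Lemma is_derive_gradL S w (k : 'I_d) e :
  is_derive w e (fun u => gradL S u k 0) ((hessL S w *m e) k 0).
Proof.
have -> : (fun u => gradL S u k 0) = fun u =>
    \sum_(i in S) x i k 0 * dl1 l (dotv u (x i)) (y i) + lam * #|S|%:R * dotv u (basisv R k).
  apply/funext => u; rewrite !mxE summxE dotvC dotv_basisl; congr (_ + _).
  by apply: eq_bigr => i _; rewrite !mxE mulrC.
have loss_d : is_derive w e (fun u => \sum_(i in S) x i k 0 * dl1 l (dotv u (x i)) (y i))
    (\sum_(i in S) x i k 0 * (dl2 l (dotv w (x i)) (y i) * dotv e (x i))).
  apply: (is_derive_bigsum _ (F := fun i u => x i k 0 * dl1 l (dotv u (x i)) (y i))) => i.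
  apply: (is_deriveZ (x i k 0)).
  exact: (is_derive_comp_dotv (g := fun t => dl1 l t (y i)) _ (is_derive_dl1 _ _)).
have coord_d : is_derive w e (fun u => dotv u (basisv R k)) (1 * dotv e (basisv R k)).
  exact: (is_derive_comp_dotv (g := id)).
have -> : (hessL S w *m e) k 0 =
    \sum_(i in S) x i k 0 * (dl2 l (dotv w (x i)) (y i) * dotv e (x i))
    + lam * #|S|%:R * (1 * dotv e (basisv R k)).
  rewrite hessL_mulmx !mxE summxE mul1r dotvC dotv_basisl; congr (_ + _).
  by apply: eq_bigr => i _; rewrite !mxE mulrC (dotvC (x i)).
exact: (is_deriveD loss_d (is_deriveZ _ coord_d)).
Qed.

Lemma hess_regL S w : hess (regL l lam x y S) w = hessL S w.
Proof.
exact: hess_is_derive (is_derive_regL S) (is_derive_gradL S w).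
Qed.

Lemma convex_dl2_ge0 : loss_convex l -> forall z yv, 0 <= dl2 l z yv.
Proof.
move=> l_cvx z yv; rewrite /dl2 derive1E.
apply: nondecreasing_derive1_ge0 => [a b ab|]; last exact: dl1_derivable.
rewrite /dl1 !derive1E.
exact: (@convex_derive1_nondecreasing _ (fun t => l t yv) (l_cvx yv) (@l_derivable yv)).
Qed.

Lemma gradL_taylor S w v gamma :
  (forall yv a b : R, `|dl2 l a yv - dl2 l b yv| <= gamma * `|a - b|) ->
  (forall i, norm2 (x i) <= 1) ->
  norm2 (gradL S (w + v) - gradL S w - hessL S w *m v) <= gamma * #|S|%:R * norm2 v ^+ 2.
Proof.
move=> dl2_lip x_le1.
pose r i := dl1 l (dotv (w + v) (x i)) (y i) - dl1 l (dotv w (x i)) (y i)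
            - dl2 l (dotv w (x i)) (y i) * dotv (x i) v.
have -> : gradL S (w + v) - gradL S w - hessL S w *m v = \sum_(i in S) r i *: x i.
  rewrite hessL_mulmx /gradL /r; under [RHS]eq_bigr => i _ do rewrite !scalerBl.
  rewrite !sumrB scalerDr; apply/matrixP => k j; rewrite !mxE; ring.
apply: le_trans (norm2_sum_le _ _) _; rewrite mulrAC mulr_natr -sumr_const.
apply: ler_sum => i _; rewrite norm2Z.
have r_le : `|r i| <= gamma * dotv v (x i) ^+ 2.
  rewrite /r dotvDl (dotvC (x i) v).
  exact: (lipschitz_derive1_remainder (f := fun t => dl1 l t (y i)) _ _ (is_derive_dl1^~ _)).
have vx_le : dotv v (x i) ^+ 2 <= norm2 v ^+ 2.
  rewrite -real_normK ?num_real // ler_sqr ?nnegrE ?normr_ge0 ?norm2_ge0 //.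
  apply: le_trans (dotv_le _ _) _; rewrite -[leRHS]mulr1.
  by apply: ler_wpM2l; [exact: norm2_ge0 | exact: x_le1].
have gamma_ge0 : 0 <= gamma by apply: (@lipschitz_ge0 _ (fun t => dl2 l t (y i))) => a b.
apply: le_trans (_ : `|r i| * 1 <= _); first by apply: ler_wpM2l; [exact: normr_ge0 | exact: x_le1].
rewrite mulr1.
exact: le_trans r_le (ler_wpM2l gamma_ge0 vx_le).
Qed.

End RegularizedLoss.

Lemma card_set_ord_lt (n k : nat) : (k <= n)%N -> #|[set i : 'I_n | (i < k)%N]| = k.
Proof.
move=> kn; rewrite -sum1_card (eq_bigl (fun i : 'I_n => (i < k)%N)); last by move=> i; rewrite inE.
by rewrite (big_ord_narrow kn) sum1_card card_ord.
Qed.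

Lemma sqr_le_of_scaled_le (R : realFieldType) (g a N t b : R) :
  0 <= g -> 0 < a -> 0 < N -> 0 <= t -> a * N * t <= b ->
  g * N * t ^+ 2 <= g * b ^+ 2 / (a ^+ 2 * N).
Proof.
move=> g_ge0 a_gt0 N_gt0 t_ge0 aNt_le; rewrite ler_pdivlMr ?mulr_gt0 ?exprn_gt0 //.
rewrite [leLHS](_ : _ = g * (a * N * t) ^+ 2); last by ring.
have aNt_ge0 : 0 <= a * N * t by rewrite !mulr_ge0 // ltW.
apply: ler_wpM2l => //; rewrite ler_sqr ?nnegrE //.
exact: le_trans aNt_ge0 aNt_le.
Qed.

Theorem theorem4 (R : realType) (n m d : nat) (x : 'I_n -> 'cV[R]_d) (y : 'I_n -> R)
    (l : R -> R -> R) (lam C gamma : R) (wstar : 'cV[R]_d) :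
  (1 <= m)%N -> (m < n)%N ->
  loss_convex l ->
  (forall yv z : R, derivable (fun t => l t yv) z 1) ->
  (forall yv z : R, derivable (fun t => dl1 l t yv) z 1) ->
  0 < lam ->
  (* w* = argmin L(. ; D) *)
  (forall w : 'cV[R]_d, regL l lam x y [set: 'I_n] wstar <= regL l lam x y [set: 'I_n] w) ->
  (* gradient bound *)
  (forall (i : 'I_n) (w : 'cV[R]_d),
      norm2 (grad (fun u => l (dotv u (x i)) (y i)) w) <= C) ->
  (* l'' is gamma-Lipschitz *)
  (forall yv a b : R, `|dl2 l a yv - dl2 l b yv| <= gamma * `|a - b|) ->
  (forall i : 'I_n, norm2 (x i) <= 1) ->
  let Dm := [set i : 'I_n | (n - m <= i)%N] in
  let Drest := [set i : 'I_n | (i < n - m)%N] in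
  let Delta := (m%:R * lam) *: wstar
      + \sum_(j in Dm) grad (fun u => l (dotv u (x j)) (y j)) wstar in
  let H := hess (regL l lam x y Drest) wstar in
  let v := invmx H *m Delta in
  let wm := wstar + v in
  norm2 (grad (regL l lam x y Drest) wm) <= gamma * (n - m)%:R * norm2 v ^+ 2
  /\ gamma * (n - m)%:R * norm2 v ^+ 2
     <= 4 * gamma * m%:R ^+ 2 * C ^+ 2 / (lam ^+ 2 * (n - m)%:R).
Proof.
move=> m_ge1 mn l_cvx l_d dl1_d lam_gt0 wmin gradC dl2_lip x_le1 Dm Drest Delta H v wm.
have dl2_ge0 := convex_dl2_ge0 l_d dl1_d l_cvx.
have gradC' i : norm2 (dl1 l (dotv wstar (x i)) (y i) *: x i) <= C.
  by rewrite -grad_loss_term.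
have card_Drest : #|Drest| = (n - m)%N by rewrite card_set_ord_lt // leq_subr.
have Dm_compl : Dm = ~: Drest by apply/setP => i; rewrite !inE -leqNgt.
have card_Dm : #|~: Drest| = m.
  by rewrite cardsCs finset.setCK card_ord card_Drest subKn // ltnW.
have Delta_E : Delta = gradL l lam x y (~: Drest) wstar.
  rewrite /Delta /gradL card_Dm -Dm_compl addrC mulrC; congr (_ + _).
  by apply: eq_bigr => j _; exact: grad_loss_term.
have crit := gradL_eq0_at_min l_d wmin.
have HE : H = hessL l lam x y Drest wstar by exact: hess_regL.
have Hv : H *m v = Delta by rewrite mulKVmx // HE hessL_unit // card_Drest subn_gt0.
split.
  rewrite grad_regL // -[gradL _ _ _ _ _ wm]subr0 -crit -(gradL_setC _ _ _ _ Drest) -Delta_E -Hv.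
  by rewrite opprD addrA HE -card_Drest; exact: gradL_taylor.
rewrite (_ : 4 * gamma * m%:R ^+ 2 * C ^+ 2 = gamma * (2 * m%:R * C) ^+ 2); last by ring.
apply: sqr_le_of_scaled_le => //.
- exact: (lipschitz_ge0 (g := fun t => dl2 l t 0) (dl2_lip 0)).
- by rewrite ltr0n subn_gt0.
- exact: norm2_ge0.
rewrite -card_Drest -card_Dm; apply: norm2_newton_step_le => //.
- exact: leq_ltn_trans (leq0n m) mn.
- exact: crit.
- by rewrite -HE Hv.
Qed.
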